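(* For every integer $d>2$, $\gamma_{gr}^{L,d-1}(Q_d)=2^d-1$ and $\gamma_{gr}^{L,d-2}(Q_d)=2^d-2$.
   Context: $Q_d$ is the $d$-dimensional hypercube: vertices are the $0$-$1$ strings of length $d$, adjacent iff they differ in exactly one position. For a vertex $v$, $N(v)$ is its open neighborhood and $N[v]=N(v)\cup\{v\}$. A sequence $S=(v_1,\ldots,v_m)$ of distinct vertices is a $k$-$L$-sequence if for each $i$ there is $u_i\in N[v_i]$ such that the number of indices $j<i$ with $u_i\in N(v_j)$ is less than $k$. $\gamma_{gr}^{L,k}(G)$ is the maximum length of a $k$-$L$-sequence of $G$. *)

From mathcomp Require Import all_boot.
Set Implicit Arguments. Unset Strict Implicit. Unset Printing Implicit Defensive.

Definition Qvert (d : nat) := {ffun 'I_d -> bool}.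

Definition qadj (d : nat) (u v : Qvert d) : bool := #|[set i | u i != v i]| == 1.

Definition qcadj (d : nat) (u v : Qvert d) : bool := (u == v) || qadj u v.

Definition is_kL_seq (d k : nat) (S : seq (Qvert d)) : bool :=
  uniq S &&
  [forall i : 'I_(size S),
     [exists u : Qvert d,
        qcadj u (nth u S i) &&
        (#|[set j : 'I_(size S) | (j < i) && qadj u (nth u S j)]| < k)]].

(* maximum length of a k-L-sequence (lengths are bounded by #|Q_d| by distinctness) *)
Definition gamma_grLk (d k : nat) : nat :=
  \max_(n < #|{: Qvert d}|.+1 | [exists t : n.-tuple (Qvert d), is_kL_seq k (val t)]) n.

From mathcomp Require Import all_boot.
From mathcomp Require Import zify.
Set Implicit Arguments. Unset Strict Implicit. Unset Printing Implicit Defensive.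

(* Upper bound: let u be the vertex chosen for the last vertex of a k-L-sequence of
   length m. Each of the d neighbours of u lies outside the sequence, is its last vertex, or is one
   of the fewer than k earlier vertices adjacent to u, so d <= (2^d - m) + 1 + (k - 1).
   Lower bounds: list the vertices by increasing Hamming weight, each light vertex
   witnessing itself (its earlier neighbours are the lighter ones). For k = d - 1,
   omit one vertex of weight d - 1 and put the all-ones vertex before the other
   vertices of weight d - 1, which it then witnesses: among its d neighbours, the
   omitted one and the vertex itself do not count. For k = d - 2, omit the all-ones
   vertex and one vertex of weight d - 2; each vertex of weight d - 2 is witnessed
   by a neighbour of weight d - 1, three of whose neighbours do not count. *)

Lemma card_prefix_nth (T : finType) (s : seq T) (x0 : T) (i : nat) (P : pred T) :
  uniq s ->
  #|[set j : 'I_(size s) | (j < i) && P (nth x0 s j)]| =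
  #|[set y | (y \in take i s) && P y]|.
Proof.
move=> us; rewrite -(card_in_imset (f := fun j : 'I_(size s) => nth x0 s j)); last first.
  by move=> j k _ _ /eqP; rewrite nth_uniq // => /eqP /val_inj.
apply: eq_card => y; rewrite inE; apply/imsetP/andP => [[j]|[yi Py]].
  rewrite inE => /andP[ji Pj] ->; split=> //.
  by rewrite in_take ?mem_nth // index_uniq.
have ys := mem_take yi; have ys' : index y s < size s by rewrite index_mem.
exists (Ordinal ys'); last by rewrite nth_index.
by rewrite inE /= -in_take // nth_index ?yi.
Qed.

Lemma mem_take_sorted (T : eqType) (leT : rel T) (x0 : T) (s : seq T) (i : nat) (y : T) :
  transitive leT -> reflexive leT -> sorted leT s -> uniq s -> i < size s ->
  y \in take i s -> (y != nth x0 s i) && leT y (nth x0 s i).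
Proof.
move=> leT_tr leT_refl ss us ilt yi.
have ys := mem_take yi; have yidx : index y s < i by rewrite -in_take.
rewrite -{1 2}(nth_index x0 ys) nth_uniq ?index_mem //; apply/andP; split.
  by rewrite neq_ltn yidx.
by apply: sorted_leq_nth; rewrite ?inE ?index_mem // ltnW.
Qed.

Lemma card_subsetC_le (T : finType) (A B : {set T}) :
  A \subset ~: B -> #|A| + #|B| <= #|T|.
Proof. by move/subset_leq_card; rewrite -(cardsC B); lia. Qed.

Section Hypercube.
Variable d : nat.
Local Notation V := (Qvert d).

Definition flip (u : V) (t : 'I_d) : V := [ffun j => u j (+) (j == t)].
Definition qtop : V := [ffun => true].
Definition wt (x : V) : nat := #|[set j | x j]|.

Lemma flipK (u : V) t : flip (flip u t) t = u.
Proof. by apply/ffunP => j; rewrite !ffunE addbK. Qed.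

Lemma flipC (u : V) p r : flip (flip u p) r = flip (flip u r) p.
Proof. by apply/ffunP => j; rewrite !ffunE addbAC. Qed.

Lemma flip_inj (u : V) : injective (flip u).
Proof. by move=> t t' /ffunP/(_ t); rewrite !ffunE eqxx => /addbI/esym/eqP. Qed.

Lemma qadj_flip (u : V) t : qadj u (flip u t).
Proof.
rewrite /qadj (_ : [set i | _] = [set t]) ?cards1 //.
by apply/setP => j; rewrite !inE ffunE; case: (u j); case: (j == t).
Qed.

Lemma qadjP (u y : V) : qadj u y -> exists t, y = flip u t.
Proof.
move=> /cards1P[t /setP ht]; exists t; apply/ffunP => j.
by move: (ht j); rewrite !inE ffunE => <-; case: (u j); case: (y j).
Qed.

Lemma card_nbr_flip (u : V) (P : pred V) :
  #|[set y | qadj u y && P y]| = #|[set t | P (flip u t)]|.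
Proof.
rewrite -(card_imset _ (@flip_inj u)); apply: eq_card => y; rewrite inE.
apply/andP/imsetP => [[/qadjP[t ->] Pt] | [t]]; first by exists t; rewrite ?inE.
by rewrite inE => Pt ->; rewrite qadj_flip.
Qed.

Lemma card_nbr (u : V) : #|[set y | qadj u y]| = d.
Proof.
rewrite -[RHS]card_ord -cardsT -(card_nbr_flip u predT).
by apply: eq_card => y; rewrite !inE andbT.
Qed.

Lemma wt_le (x : V) : wt x <= d.
Proof. by rewrite -[X in _ <= X]card_ord max_card. Qed.

Lemma wt_flip (x : V) t : wt (flip x t) = if x t then (wt x).-1 else (wt x).+1.
Proof.
rewrite /wt; case: ifP => xt.
  rewrite (cardsD1 t [set j | x j]) inE xt add1n succnK; apply: eq_card => j.
  by rewrite !inE ffunE; case: (eqVneq j t) => [->|]; rewrite ?xt ?addbT ?addbF.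
transitivity #|t |: [set j | x j]|; last by rewrite cardsU1 inE xt.
apply: eq_card => j.
by rewrite !inE ffunE; case: (eqVneq j t) => [->|]; rewrite ?xt ?addbT ?addbF.
Qed.

Lemma wt_qtop : wt qtop = d.
Proof. by rewrite /wt -[RHS]card_ord -cardsT; apply: eq_card => j; rewrite !inE ffunE. Qed.

Lemma wt_eq_qtop (x : V) : wt x = d -> x = qtop.
Proof.
move=> wx; have /eqP/setP xT : [set j | x j] == setT.
  by rewrite eqEcard subsetT cardsT card_ord; move: wx => /esym/eq_leq.
by apply/ffunP => j; move: (xT j); rewrite !inE ffunE.
Qed.

Lemma exists_zero (x : V) : wt x < d -> exists q, ~~ x q.
Proof.
case: (pickP [pred q | ~~ x q]) => [q xq | all_x]; first by exists q.
suff -> : x = qtop by rewrite wt_qtop ltnn.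
by apply/ffunP => j; move: (all_x j); rewrite ffunE /=; case: (x j).
Qed.

Lemma eq_flip_qtop (x : V) q : (wt x).+1 = d -> ~~ x q -> x = flip qtop q.
Proof.
move=> wx xq; rewrite -(flipK x q); congr flip.
by apply: wt_eq_qtop; rewrite wt_flip (negbTE xq).
Qed.

Lemma eq_flip2_qtop (x : V) r : (wt x).+2 = d -> ~~ x r ->
  exists2 p, p != r & x = flip (flip qtop r) p.
Proof.
move=> wx xr; have wxr : (wt (flip x r)).+1 = d by rewrite wt_flip (negbTE xr).
have [p xrp] := exists_zero (eq_leq wxr); exists p.
  by apply: contraNneq xrp => ->; rewrite ffunE eqxx (negbTE xr).
by rewrite flipC -(eq_flip_qtop wxr xrp) flipK.
Qed.

Lemma is_kL_seqE k (S : seq V) :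
  is_kL_seq k S = uniq S && [forall i : 'I_(size S), exists u,
    qcadj u (nth u S i) && (#|[set y | (y \in take i S) && qadj u y]| < k)].
Proof.
rewrite /is_kL_seq; case: (boolP (uniq S)) => //= uS.
by apply: eq_forallb => i; apply: eq_existsb => u; rewrite card_prefix_nth.
Qed.

Lemma card_Qvert : #|{: V}| = 2 ^ d.
Proof. by rewrite card_ffun card_bool card_ord. Qed.

Lemma size_kL_seq_le k (S : seq V) : is_kL_seq k S -> size S + d <= 2 ^ d + k.
Proof.
case/lastP: S => [_ | s x]; first by have := ltn_expl d (ltnSn 1); rewrite add0n; lia.
rewrite is_kL_seqE => /andP[uS /forallP all_i].
have last_i : size s < size (rcons s x) by rewrite size_rcons.
have /existsP[u /andP[_]] := all_i (Ordinal last_i).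
have -> : take (Ordinal last_i) (rcons s x) = s by rewrite [in LHS]/= -cats1 take_size_cat.
set E := [set y | (y \in s) && qadj u y] => few.
set C := ~: [set y | y \in rcons s x].
have nbr_sub : [set y | qadj u y] \subset E :|: C :|: [set x].
  apply/subsetP => y; rewrite !inE mem_rcons inE => uy; rewrite uy andbT.
  by case: (y == x); case: (y \in s); rewrite ?orbT.
have card_C : #|C| + size (rcons s x) = 2 ^ d.
  have <- : #|[set y | y \in rcons s x]| = size (rcons s x).
    by rewrite cardsE; apply/card_uniqP.
  by rewrite addnC cardsC card_Qvert.
have nbr_le : d <= #|E| + #|C| + 1.
  rewrite -[X in X <= _](card_nbr u) -(cards1 x).
  apply: leq_trans (subset_leq_card nbr_sub) _.
  by apply: leq_trans (leq_card_setU _ _).1 _; rewrite leq_add2r (leq_card_setU _ _).1.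
by rewrite -card_C size_rcons; lia.
Qed.

Definition sort_by_key (K : {set V}) (ka : V -> nat) : seq V :=
  sort (relpre ka leq) (enum K).

Definition earlier_dirs (K : {set V}) (ka : V -> nat) (u x : V) : {set 'I_d} :=
  [set t | [&& flip u t \in K, flip u t != x & ka (flip u t) <= ka x]].

Lemma size_sort_by_key (K : {set V}) (ka : V -> nat) : size (sort_by_key K ka) = #|K|.
Proof. by rewrite size_sort cardE. Qed.

Lemma sort_by_key_kL k (K : {set V}) (ka : V -> nat) :
  (forall x, x \in K -> exists2 u, qcadj u x & #|earlier_dirs K ka u x| < k) ->
  is_kL_seq k (sort_by_key K ka).
Proof.
move=> witness; set S := sort_by_key K ka.
have uS : uniq S by rewrite sort_uniq enum_uniq.
have mem_S y : (y \in S) = (y \in K) by rewrite mem_sort mem_enum.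
have sorted_S : sorted (relpre ka leq) S.
  by apply: sort_sorted => y z; apply: leq_total.
rewrite is_kL_seqE uS; apply/forallP => i; set x := nth qtop S i.
have [u ux few] : exists2 u, qcadj u x & #|earlier_dirs K ka u x| < k.
  by apply: witness; rewrite -mem_S mem_nth.
apply/existsP; exists u; rewrite (set_nth_default qtop) // -/x ux /=.
apply: leq_ltn_trans few.
rewrite /earlier_dirs -(card_nbr_flip u [pred y | [&& y \in K, y != x & ka y <= ka x]]).
apply/subset_leq_card/subsetP => y; rewrite !inE => /andP[yi ->].
have key_refl : reflexive (relpre ka leq) by move=> z /=.
have /andP[-> /= ->] :=
  mem_take_sorted qtop (relpre_trans leq_trans) key_refl sorted_S uS (ltn_ord i) yi.
by rewrite -mem_S (mem_take yi).
Qed.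

Lemma earlier_dirs_low (K : {set V}) (ka : V -> nat) (w : nat) (x : V) :
  (forall y, wt y <= w -> ka y = wt y) -> (forall y, w < wt y -> w < ka y) ->
  wt x <= w -> #|earlier_dirs K ka x x| <= wt x.
Proof.
move=> ka_low ka_high wx; apply/subset_leq_card/subsetP => t; rewrite !inE.
case/and3P=> _ _; apply: contraLR => xt; rewrite -ltnNge (ka_low x wx).
have wxt : wt (flip x t) = (wt x).+1 by rewrite wt_flip (negbTE xt).
case: (leqP (wt (flip x t)) w) => [/ka_low -> | /ka_high]; first by rewrite wxt.
exact: leq_ltn_trans.
Qed.

Lemma gamma_grLk_eq k (S : seq V) :
  is_kL_seq k S -> (forall S' : seq V, is_kL_seq k S' -> size S' <= size S) ->
  gamma_grLk d k = size S.
Proof.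
move=> kS S_max; apply/eqP; rewrite eqn_leq; apply/andP; split.
  by apply/bigmax_leqP => n /existsP[t /S_max]; rewrite size_tuple.
have size_lt : size S < #|{: V}|.+1.
  by case/andP: kS => /card_uniqP <- _; rewrite ltnS max_card.
apply: leq_trans (leq_bigmax_cond (Ordinal size_lt) _) => //=.
by apply/existsP; exists (in_tuple S).
Qed.

Lemma gamma_grLk_extremal k (S : seq V) :
  is_kL_seq k S -> size S + d = 2 ^ d + k -> gamma_grLk d k = size S.
Proof.
move=> kS size_S; apply: gamma_grLk_eq kS _ => S' /size_kL_seq_le.
by rewrite -size_S leq_add2r.
Qed.

Lemma wt_flip_qtop t : (wt (flip qtop t)).+1 = d.
Proof. by rewrite wt_flip ffunE wt_qtop prednK // (leq_ltn_trans _ (ltn_ord t)). Qed.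

Section AllButOne.
Variable a : 'I_d.
Hypothesis d_gt1 : 1 < d.

Definition K1 : {set V} := [set~ flip qtop a].

Definition key1 (x : V) : nat :=
  if (wt x).+1 == d then d else if wt x == d then d.-1 else wt x.

Definition seq_all_but_one : seq V := sort_by_key K1 key1.

Lemma size_seq_all_but_one : size seq_all_but_one = 2 ^ d - 1.
Proof. by rewrite size_sort_by_key cardsC1 card_Qvert subn1. Qed.

Lemma kL_seq_all_but_one : is_kL_seq (d - 1) seq_all_but_one.
Proof.
apply: sort_by_key_kL => x; rewrite !inE => x_ne.
case: (ltngtP (wt x).+1 d) => [wx | wx | wx].
- exists x; first by rewrite /qcadj eqxx.
  apply: leq_ltn_trans (@earlier_dirs_low K1 key1 (d - 2) x _ _ _) _; rewrite /key1.
  + by move=> y wy; rewrite !ifN //; lia.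
  + move=> y wy; have := wt_le y; case: ifP => _; first lia.
    by case: ifP => _; lia.
  + lia.
  + lia.
- have -> : x = qtop by apply/wt_eq_qtop/eqP; rewrite eqn_leq wt_le.
  exists qtop; first by rewrite /qcadj eqxx.
  rewrite (_ : earlier_dirs _ _ _ _ = set0) ?cards0; first lia.
  apply/setP => t; rewrite !inE /key1 wt_flip_qtop eqxx wt_qtop eqxx.
  by rewrite ifN ?(ltnNge d.-1) ?andbF //; lia.
- have [q xq] := exists_zero (leq_ltn_trans (eq_leq wx) (ltnSn _)).
  have x_eq := eq_flip_qtop wx xq.
  have qa : q != a by apply: contra_neq x_ne => <-.
  exists qtop; first by rewrite /qcadj x_eq qadj_flip orbT.
  have sub : earlier_dirs K1 key1 qtop x \subset ~: [set q; a].
    apply/subsetP => t; rewrite !inE x_eq => /and3P[ta tq _].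
    rewrite negb_or; apply/andP.
    by split; [apply: contraNneq tq | apply: contraNneq ta] => ->.
  have := card_subsetC_le sub; rewrite cards2 qa card_ord; lia.
Qed.
End AllButOne.

Section AllButTwo.
Variables a b : 'I_d.
Hypothesis ab : a != b.
Hypothesis d_gt2 : 2 < d.

Definition K2 : {set V} := [set~ qtop] :\ flip (flip qtop a) b.

Definition key2 (x : V) : nat :=
  if (wt x).+1 == d then d - 2
  else if (wt x).+2 == d then (if x a then d - 1 else d) else wt x.

Lemma key2_mid (x : V) : (wt x).+2 = d -> key2 x = if x a then d - 1 else d.
Proof. by move=> wx; rewrite /key2 wx eqxx ifN // -wx eqSS neq_ltn ltnSn. Qed.

Lemma earlier_dirs_mid (x : V) : x \in K2 -> (wt x).+2 = d ->
  exists2 u, qcadj u x & #|earlier_dirs K2 key2 u x| < d - 2.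
Proof.
rewrite !inE => /andP[x_ne_ab _] wx.
have [r xr r_a] : exists2 r, ~~ x r & ~~ x a -> r = a.
  case xa: (x a); last by exists a; rewrite ?xa.
  by have [r] := exists_zero (ltnW (eq_leq wx)); exists r.
have [p pr x_eq] := eq_flip2_qtop wx xr.
set u := flip qtop r in x_eq.
exists u; first by rewrite /qcadj x_eq qadj_flip orbT.
set c := if x a then a else b.
have xp : ~~ x p by rewrite x_eq !ffunE eqxx (negbTE pr).
have cp : c != p.
  rewrite /c; case: ifPn => xa; first by apply: contraNneq xp => <-.
  by apply: contra_neq x_ne_ab => cp; rewrite x_eq /u cp (r_a xa).
have cr : c != r.
  rewrite /c; case: ifPn => xa; first by apply: contraNneq xr => <-.
  by rewrite (r_a xa) eq_sym.
(* Besides [p] and [r], the direction [c] is excluded: by the key if [x a] holds,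
   and otherwise because then [r = a] and [flip u b] is the omitted vertex. *)
have sub : earlier_dirs K2 key2 u x \subset ~: [set p; r; c].
  apply/subsetP => t; rewrite !inE => /and3P[/andP[t_ab t_top] t_x t_key].
  rewrite !negb_or -!andbA; apply/and3P; split.
  - by apply: contraNneq t_x => ->; rewrite x_eq.
  - by apply: contraNneq t_top => ->; rewrite flipK.
  - rewrite /c; case: ifPn => xa; last first.
      by apply: contraNneq t_ab => ->; rewrite /u (r_a xa).
    apply: contraL t_key => /eqP ->.
    have ua : u a by rewrite /u ffunE ffunE addTb; apply: contraNneq xr => <-.
    have wu : (wt u).+1 = d by apply: wt_flip_qtop.
    have wua : (wt (flip u a)).+2 = d.
      by rewrite wt_flip ua prednK // -ltnS wu ltnW.
    rewrite (key2_mid wua) (key2_mid wx) xa ffunE eqxx ua /=.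
    by rewrite -ltnNge subn1 ltn_predL ltnW // ltnW.
have := card_subsetC_le sub; rewrite -setUA cardsU1 cards2 !inE card_ord.
by rewrite (negbTE pr) !(eq_sym _ c) (negbTE cp) cr; lia.
Qed.

Definition seq_all_but_two : seq V := sort_by_key K2 key2.

Lemma size_seq_all_but_two : size seq_all_but_two = 2 ^ d - 2.
Proof.
rewrite size_sort_by_key.
have ab_top : flip (flip qtop a) b \in [set~ qtop].
  by rewrite !inE; apply/eqP => /ffunP/(_ a); rewrite !ffunE eqxx (negbTE ab).
have := cardsD1 (flip (flip qtop a) b) [set~ qtop].
by rewrite ab_top cardsC1 card_Qvert add1n -/K2 subn2 => ->.
Qed.

Lemma kL_seq_all_but_two : is_kL_seq (d - 2) seq_all_but_two.
Proof.
apply: sort_by_key_kL => x xK.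
have wx_lt : wt x < d.
  rewrite ltn_neqAle wt_le andbT; apply: contraTneq xK => /wt_eq_qtop ->.
  by rewrite !inE eqxx andbF.
case: (ltngtP (wt x).+2 d) => [wx | wx | wx].
- exists x; first by rewrite /qcadj eqxx.
  apply: leq_ltn_trans (@earlier_dirs_low K2 key2 (d - 3) x _ _ _) _; rewrite /key2.
  + by move=> y wy; rewrite !ifN //; lia.
  + move=> y wy; have := wt_le y; case: ifP => _; first lia.
    by case: ifP => _; [case: ifP|]; lia.
  + lia.
  + lia.
- have wx1 : (wt x).+1 = d by lia.
  exists x; first by rewrite /qcadj eqxx.
  rewrite (_ : earlier_dirs _ _ _ _ = set0) ?cards0; first lia.
  apply/setP => t; rewrite !inE; apply/negbTE; case xt: (x t).
  + have wxt : (wt (flip x t)).+2 = d by rewrite wt_flip xt; lia.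
    have key_x : key2 x = d - 2 by rewrite /key2 wx1 eqxx.
    have key_xt : d - 2 < key2 (flip x t).
      by rewrite /key2 wxt eqxx; case: ifP => [/eqP | _]; [lia | case: ifP; lia].
    by rewrite key_x leqNgt key_xt !andbF.
  + have wxt : wt (flip x t) = d by rewrite wt_flip xt.
    by rewrite (wt_eq_qtop wxt) eqxx andbF.
- exact: earlier_dirs_mid.
Qed.

End AllButTwo.

End Hypercube.

Theorem mainTheorem11 (d : nat) (hd : 2 < d) :
  gamma_grLk d (d - 1) = 2 ^ d - 1 /\ gamma_grLk d (d - 2) = 2 ^ d - 2.
Proof.
have d_lt : d < 2 ^ d := ltn_expl d (ltnSn 1).
pose a : 'I_d := Ordinal (ltnW (ltnW hd)); pose b : 'I_d := Ordinal (ltnW hd).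
have ab : a != b by [].
split.
- rewrite -(size_seq_all_but_one a); apply: gamma_grLk_extremal.
    exact: kL_seq_all_but_one (ltnW hd).
  by rewrite size_seq_all_but_one; lia.
- rewrite -(size_seq_all_but_two ab); apply: gamma_grLk_extremal.
    exact: kL_seq_all_but_two ab hd.
  by rewrite size_seq_all_but_two; lia.
Qed.
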